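(* Let $0<\gamma<2$, $\gamma\ne 4/3$, let $\chi\in C^3(\mathbb{R})$ with $\chi>0$, and let $\phi_1$ satisfy $\chi'(\phi_1)=0$. Set $\Delta_1=(\gamma-2)/4$ and $\Delta_2=(4-3\gamma)/6$. Then: (a) $(x,y,z,\phi)=(0,0,1,\phi_1)$ is an equilibrium of system $(\ast)$, and the linearization of $(\ast)$ there has eigenvalues $\gamma/2,\ \gamma,\ \Delta_1\pm\sqrt{\Delta_1^2+\Delta_2\,\chi''(\phi_1)/\chi(\phi_1)}$. (b) For the planar system $y'=\tfrac12(1-y^2)\Big(y(\gamma-2)+\frac{4-3\gamma}{\sqrt6}\frac{\chi'(\phi)}{\chi(\phi)}\Big)$, $\phi'=\sqrt{2/3}\,y$ (the restriction of $(\ast)$ to $x=0$, $y^2+z^2=1$), the equilibrium $(y,\phi)=(0,\phi_1)$ has linearization eigenvalues $\Delta_1\pm\sqrt{\Delta_1^2+\Delta_2\chi''(\phi_1)/\chi(\phi_1)}$, and it is: a stable focus if either $0<\gamma<4/3$ and $\chi''(\phi_1)<-\Delta_1^2\chi(\phi_1)/\Delta_2$, or $4/3<\gamma<2$ and $\chi''(\phi_1)>-\Delta_1^2\chi(\phi_1)/\Delta_2$; a stable node if either $0<\gamma<4/3$ and $-\Delta_1^2\chi(\phi_1)/\Delta_2\le\chi''(\phi_1)<0$, or $4/3<\gamma<2$ and $0<\chi''(\phi_1)\le-\Delta_1^2\chi(\phi_1)/\Delta_2$; a saddle if either $0<\gamma<4/3$ and $\chi''(\phi_1)>0$, or $4/3<\gamma<2$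 and $\chi''(\phi_1)<0$; and non-hyperbolic if $\chi''(\phi_1)=0$.
   Context: System $(\ast)$ (prime $=d/d\tau$): $x'=\tfrac12 x(2y^2+\gamma z^2)$; $y'=y^3+\tfrac12(\gamma z^2-2)y-\frac{x^2V'(\phi)}{3\sqrt6}+\frac{(4-3\gamma)z^2}{2\sqrt6}\frac{\chi'(\phi)}{\chi(\phi)}$; $z'=\tfrac12 z(2y^2+(z^2-1)\gamma)-\frac{(4-3\gamma)yz}{2\sqrt6}\frac{\chi'(\phi)}{\chi(\phi)}$; $\phi'=\sqrt{2/3}\,y$, where $V\in C^3$, $V\ge0$. Eigenvalues in (a) refer to the Jacobian of the vector field at the point (with the $z$-direction understood as the direction normal to the circle $y^2+z^2=1$ within the constraint surface). *)

From Stdlib Require Import Reals Lra Lia.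
Open Scope R_scope.

Definition C3 (f f1 f2 f3 : R -> R) : Prop :=
  (forall t, derivable_pt_lim f t (f1 t)) /\
  (forall t, derivable_pt_lim f1 t (f2 t)) /\
  (forall t, derivable_pt_lim f2 t (f3 t)) /\
  continuity f3.

(** Points of R^n are represented as nat -> R, only indices < n matter. *)
Fixpoint fsum (n : nat) (f : nat -> R) : R :=
  match n with O => 0 | S k => fsum k f + f k end.

Definition upd (p : nat -> R) (j : nat) (t : R) : nat -> R :=
  fun k => if Nat.eqb k j then t else p k.

Definition is_jacobian (n : nat) (F : (nat -> R) -> (nat -> R))
  (p : nat -> R) (J : nat -> nat -> R) : Prop :=
  forall i j, (i < n)%nat -> (j < n)%nat ->
    derivable_pt_lim (fun t => F (upd p j t) i) (p j) (J i j).

(** a + i b is a (complex) eigenvalue of the real n x n matrix J: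
    there is a nonzero complex vector u + i w with J (u+iw) = (a+ib)(u+iw). *)
Definition is_ceig (n : nat) (J : nat -> nat -> R) (a b : R) : Prop :=
  exists u w : nat -> R,
    (exists k, (k < n)%nat /\ (u k <> 0 \/ w k <> 0)) /\
    forall i, (i < n)%nat ->
      fsum n (fun j => J i j * u j) = a * u i - b * w i /\
      fsum n (fun j => J i j * w j) = b * u i + a * w i.

Definition equilibrium (n : nat) (F : (nat -> R) -> (nat -> R)) (p : nat -> R) :=
  forall i, (i < n)%nat -> F p i = 0.

(** principal complex square root of a real number, as (Re, Im) *)
Definition csqrt (D : R) : R * R :=
  if Rle_dec 0 D then (sqrt D, 0) else (0, sqrt (- D)).

Definition stable_focus n F p : Prop :=
  equilibrium n F p /\ exists J, is_jacobian n F p J /\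
    (forall a b, is_ceig n J a b -> a < 0) /\
    (exists a b, is_ceig n J a b /\ b <> 0).

Definition stable_node n F p : Prop :=
  equilibrium n F p /\ exists J, is_jacobian n F p J /\
    (forall a b, is_ceig n J a b -> b = 0 /\ a < 0).

Definition saddle n F p : Prop :=
  equilibrium n F p /\ exists J, is_jacobian n F p J /\
    (forall a b, is_ceig n J a b -> b = 0 /\ a <> 0) /\
    (exists a, is_ceig n J a 0 /\ 0 < a) /\
    (exists a, is_ceig n J a 0 /\ a < 0).

Definition non_hyperbolic n F p : Prop :=
  equilibrium n F p /\ exists J, is_jacobian n F p J /\
    exists b, is_ceig n J 0 b.

(** System (ast): coordinates 0 = x, 1 = y, 2 = z, 3 = phi.
    V1 = V', chi1 = chi'. *)
Definition sysF (gamma : R) (V1 chi chi1 : R -> R) (p : nat -> R) : nat -> R :=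
  let x := p 0%nat in let y := p 1%nat in let z := p 2%nat in let phi := p 3%nat in
  fun i => match i with
  | 0%nat => / 2 * x * (2 * y ^ 2 + gamma * z ^ 2)
  | 1%nat => y ^ 3 + / 2 * (gamma * z ^ 2 - 2) * y - x ^ 2 * V1 phi / (3 * sqrt 6)
             + (4 - 3 * gamma) * z ^ 2 / (2 * sqrt 6) * (chi1 phi / chi phi)
  | 2%nat => / 2 * z * (2 * y ^ 2 + (z ^ 2 - 1) * gamma)
             - (4 - 3 * gamma) * y * z / (2 * sqrt 6) * (chi1 phi / chi phi)
  | _ => sqrt (2 / 3) * y
  end.

Definition sysG (gamma : R) (chi chi1 : R -> R) (q : nat -> R) : nat -> R :=
  let y := q 0%nat in let phi := q 1%nat in
  fun i => match i with
  | 0%nat => / 2 * (1 - y ^ 2) *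
             (y * (gamma - 2) + (4 - 3 * gamma) / sqrt 6 * (chi1 phi / chi phi))
  | _ => sqrt (2 / 3) * y
  end.

Definition Delta1 (gamma : R) := (gamma - 2) / 4.
Definition Delta2 (gamma : R) := (4 - 3 * gamma) / 6.

Definition pt4 (x y z phi : R) : nat -> R :=
  fun i => match i with 0%nat => x | 1%nat => y | 2%nat => z | _ => phi end.
Definition pt2 (y phi : R) : nat -> R :=
  fun i => match i with 0%nat => y | _ => phi end.

From Stdlib Require Import Reals Lra Lia.
Open Scope R_scope.

(** The proof is pure linear algebra once the Jacobians are known.
    - Both Jacobians are computed explicitly by a small differentiation
      tactic; the planar one is the 2x2 matrix [[2 D1, q], [r, 0]] with
      q r = D2 chi''(phi1)/chi(phi1) =: K, and the 4x4 one is that block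
      (on the coordinates y, phi) plus the diagonal entries gamma/2, gamma.
    - A complex eigenvector of a real matrix, written as two real vectors,
      forces its eigenvalue a + i b to be a root of the characteristic
      polynomial; for a 2x2 block with r <> 0 every root has an eigenvector.
    - The roots of l^2 - 2 D1 l - K are exactly D1 +- csqrt (D1^2 + K).
    - Since D1 < 0, the sign of the discriminant D1^2 + K and of K decides
      between focus, node, saddle and the non-hyperbolic case; the
      hypotheses of the theorem are these sign conditions rewritten via
      (D1^2 + K) chi(phi1) = D2 (chi''(phi1) - thr). *)

Lemma derivable_pt_lim_pow_comp (f : R -> R) (n : nat) (x a : R) :
  derivable_pt_lim f x a ->
  derivable_pt_lim (fun t => f t ^ n) x (INR n * f x ^ pred n * a).
Proof.
  intros hf.
  exact (derivable_pt_lim_comp f (fun y => y ^ n) x a _ hf (derivable_pt_lim_pow (f x) n)).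
Qed.

Lemma derivable_pt_lim_eq (f : R -> R) (x l l' : R) :
  derivable_pt_lim f x l' -> l' = l -> derivable_pt_lim f x l.
Proof. now intros hf <-. Qed.

(** Structural differentiation of rational expressions in the variable, using
    the derivative hypotheses in context for the function symbols; division
    leaves a nonvanishing side condition on the denominator. *)
Ltac differentiate :=
  first
  [ apply derivable_pt_lim_const
  | apply derivable_pt_lim_id
  | match goal with
    | |- derivable_pt_lim (fun t => @?A t + @?B t) _ _ =>
        apply (derivable_pt_lim_plus A B); differentiate
    | |- derivable_pt_lim (fun t => @?A t - @?B t) _ _ =>
        apply (derivable_pt_lim_minus A B); differentiate
    | |- derivable_pt_lim (fun t => - @?A t) _ _ =>
        apply (derivable_pt_lim_opp A); differentiate
    | |- derivable_pt_lim (fun t => @?A t * @?B t) _ _ =>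
        apply (derivable_pt_lim_mult A B); differentiate
    | |- derivable_pt_lim (fun t => @?A t / @?B t) _ _ =>
        apply (derivable_pt_lim_div A B); [differentiate | differentiate | ]
    | |- derivable_pt_lim (fun t => @?A t ^ _) _ _ =>
        apply (derivable_pt_lim_pow_comp A); differentiate
    | H : forall t, derivable_pt_lim _ t _ |- _ => apply H
    end ].

Lemma complex_mul_eq0 (Re Im u w : R) :
  Re * u - Im * w = 0 -> Re * w + Im * u = 0 -> (u <> 0 \/ w <> 0) ->
  Re = 0 /\ Im = 0.
Proof.
  intros hr hi hnz.
  assert (hu : (Re * Re + Im * Im) * u = 0).
  { replace ((Re * Re + Im * Im) * u) with (Re * (Re * u - Im * w) + Im * (Re * w + Im * u))
      by ring. rewrite hr, hi; ring. }
  assert (hw : (Re * Re + Im * Im) * w = 0).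
  { replace ((Re * Re + Im * Im) * w) with (Re * (Re * w + Im * u) - Im * (Re * u - Im * w))
      by ring. rewrite hr, hi; ring. }
  assert (hn : Re * Re + Im * Im = 0).
  { destruct hnz as [h | h]; [destruct (Rmult_integral _ _ hu) | destruct (Rmult_integral _ _ hw)];
      tauto. }
  split; nra.
Qed.

Lemma scalar_eigvec (m a b u w : R) :
  m * u = a * u - b * w -> m * w = b * u + a * w -> (u <> 0 \/ w <> 0) ->
  a = m /\ b = 0.
Proof.
  intros hr hi hnz.
  destruct (complex_mul_eq0 (m - a) (- b) u w) as [h1 h2]; [lra | lra | exact hnz | lra].
Qed.

(** a + i b is a root of l^2 - T l + D (real and imaginary parts). *)
Definition char2 (T D a b : R) : Prop :=
  a ^ 2 - b ^ 2 - T * a + D = 0 /\ 2 * a * b - T * b = 0.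

(** Real form of the eigen-equations of [[p, q], [r, s]] for the eigenvalue
    a + i b and the eigenvector (u1 + i w1, u2 + i w2). *)
Definition block2_eigeq (p q r s a b u1 w1 u2 w2 : R) : Prop :=
  p * u1 + q * u2 = a * u1 - b * w1 /\ p * w1 + q * w2 = b * u1 + a * w1 /\
  r * u1 + s * u2 = a * u2 - b * w2 /\ r * w1 + s * w2 = b * u2 + a * w2.

(** Eigenvalues of a 2x2 matrix are roots of its characteristic polynomial:
    det(M - l) U1 and det(M - l) U2 are combinations of the eigen-equations. *)
Lemma block2_char (p q r s a b u1 w1 u2 w2 : R) :
  block2_eigeq p q r s a b u1 w1 u2 w2 ->
  (u1 <> 0 \/ w1 <> 0 \/ u2 <> 0 \/ w2 <> 0) ->
  char2 (p + s) (p * s - q * r) a b.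
Proof.
  intros (h1 & h2 & h3 & h4) hnz.
  set (E1r := p * u1 + q * u2 - (a * u1 - b * w1)).
  set (E1i := p * w1 + q * w2 - (b * u1 + a * w1)).
  set (E2r := r * u1 + s * u2 - (a * u2 - b * w2)).
  set (E2i := r * w1 + s * w2 - (b * u2 + a * w2)).
  assert (z : E1r = 0 /\ E1i = 0 /\ E2r = 0 /\ E2i = 0)
    by (unfold E1r, E1i, E2r, E2i; lra).
  destruct z as (z1 & z2 & z3 & z4).
  set (Re := a ^ 2 - b ^ 2 - (p + s) * a + (p * s - q * r)).
  set (Im := 2 * a * b - (p + s) * b).
  assert (hU1 : Re * u1 - Im * w1 = (s - a) * E1r + b * E1i - q * E2r /\
                Re * w1 + Im * u1 = (s - a) * E1i - b * E1r - q * E2i)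
    by (unfold Re, Im, E1r, E1i, E2r, E2i; split; ring).
  assert (hU2 : Re * u2 - Im * w2 = - r * E1r + (p - a) * E2r + b * E2i /\
                Re * w2 + Im * u2 = - r * E1i + (p - a) * E2i - b * E2r)
    by (unfold Re, Im, E1r, E1i, E2r, E2i; split; ring).
  rewrite z1, z2, z3, z4 in hU1, hU2.
  destruct hU1 as [hU1r hU1i], hU2 as [hU2r hU2i].
  change (Re = 0 /\ Im = 0).
  destruct hnz as [h | [h | [h | h]]];
    [apply (complex_mul_eq0 _ _ u1 w1) | apply (complex_mul_eq0 _ _ u1 w1)
    | apply (complex_mul_eq0 _ _ u2 w2) | apply (complex_mul_eq0 _ _ u2 w2)]; lra.
Qed.

Lemma char2_block (p q r s a b : R) :
  char2 (p + s) (p * s - q * r) a b -> block2_eigeq p q r s a b (a - s) b r 0.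
Proof. intros [hr hi]; repeat split; nra. Qed.

Definition qroots (D1 K a b : R) : Prop :=
  let s := csqrt (D1 ^ 2 + K) in
  (a = D1 + fst s /\ b = snd s) \/ (a = D1 - fst s /\ b = - snd s).

Lemma qroots_char2 (D1 K a b : R) : char2 (2 * D1) (- K) a b <-> qroots D1 K a b.
Proof.
  unfold char2, qroots, csqrt.
  destruct (Rle_dec 0 (D1 ^ 2 + K)) as [hD | hD]; cbn [fst snd].
  - pose proof (sqrt_sqrt _ hD) as hs.
    split.
    + intros [hr hi].
      assert (hb : b = 0).
      { destruct (Rmult_integral b (2 * (a - D1))) as [hb | ha]; [lra | exact hb |].
        assert (a = D1) by lra. subst a. nra. }
      subst b.
      assert (hf : (a - D1 - sqrt (D1 ^ 2 + K)) * (a - D1 + sqrt (D1 ^ 2 + K)) = 0) by nra.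
      destruct (Rmult_integral _ _ hf); [left | right]; split; lra.
    + intros [[-> ->] | [-> ->]]; split; nra.
  - apply Rnot_le_lt in hD.
    assert (hp : 0 <= - (D1 ^ 2 + K)) by lra.
    pose proof (sqrt_sqrt _ hp) as hs.
    split.
    + intros [hr hi].
      destruct (Rmult_integral b (2 * (a - D1))) as [hb | ha];
        [lra | subst b; pose proof (pow2_ge_0 (a - D1)); nra |].
      assert (a = D1) by lra. subst a.
      assert (hf : (b - sqrt (- (D1 ^ 2 + K))) * (b + sqrt (- (D1 ^ 2 + K))) = 0) by nra.
      destruct (Rmult_integral _ _ hf); [left | right]; split; lra.
    + intros [[-> ->] | [-> ->]]; split; nra.
Qed.

Lemma qroots_complex (D1 K a b : R) :
  D1 ^ 2 + K < 0 -> qroots D1 K a b -> a = D1 /\ b <> 0.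
Proof.
  unfold qroots, csqrt; intros hD.
  destruct (Rle_dec 0 (D1 ^ 2 + K)); [lra | cbn [fst snd]].
  assert (0 < sqrt (- (D1 ^ 2 + K))) by (apply sqrt_lt_R0; lra).
  intros [[-> ->] | [-> ->]]; split; lra.
Qed.

Lemma qroots_real (D1 K a b : R) :
  0 <= D1 ^ 2 + K -> qroots D1 K a b ->
  b = 0 /\ (a = D1 + sqrt (D1 ^ 2 + K) \/ a = D1 - sqrt (D1 ^ 2 + K)).
Proof.
  unfold qroots, csqrt; intros hD.
  destruct (Rle_dec 0 (D1 ^ 2 + K)); [cbn [fst snd] | lra].
  intros [[-> ->] | [-> ->]]; split; lra.
Qed.

Lemma sqrt_disc_lt (D1 K : R) : D1 < 0 -> 0 <= D1 ^ 2 + K -> K < 0 ->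
  sqrt (D1 ^ 2 + K) < - D1.
Proof.
  intros h1 h2 h3. pose proof (sqrt_sqrt _ h2). pose proof (sqrt_pos (D1 ^ 2 + K)). nra.
Qed.

Lemma sqrt_disc_gt (D1 K : R) : D1 < 0 -> 0 < K -> - D1 < sqrt (D1 ^ 2 + K).
Proof.
  intros h1 h3. assert (h2 : 0 <= D1 ^ 2 + K) by nra.
  pose proof (sqrt_sqrt _ h2). pose proof (sqrt_pos (D1 ^ 2 + K)). nra.
Qed.

Section Classification.
Variables (n : nat) (F : (nat -> R) -> nat -> R) (p : nat -> R) (J : nat -> nat -> R).
Variables (D1 K : R).
Hypothesis D1_neg : D1 < 0.
Hypothesis equil : equilibrium n F p.
Hypothesis jac : is_jacobian n F p J.
Hypothesis spectrum : forall a b, is_ceig n J a b <-> qroots D1 K a b.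

Lemma focus_of_spectrum : D1 ^ 2 + K < 0 -> stable_focus n F p.
Proof.
  intros hD. split; [exact equil |]. exists J. split; [exact jac |]. split.
  - intros a b hab. apply spectrum in hab. destruct (qroots_complex _ _ _ _ hD hab). lra.
  - exists (D1 + fst (csqrt (D1 ^ 2 + K))), (snd (csqrt (D1 ^ 2 + K))).
    assert (hr : qroots D1 K (D1 + fst (csqrt (D1 ^ 2 + K))) (snd (csqrt (D1 ^ 2 + K))))
      by (left; split; reflexivity).
    split; [apply spectrum; exact hr | exact (proj2 (qroots_complex _ _ _ _ hD hr))].
Qed.

Lemma node_of_spectrum : 0 <= D1 ^ 2 + K -> K < 0 -> stable_node n F p.
Proof.
  intros hD hK. split; [exact equil |]. exists J. split; [exact jac |].
  intros a b hab. apply spectrum in hab.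
  destruct (qroots_real _ _ _ _ hD hab) as [hb ha].
  pose proof (sqrt_disc_lt _ _ D1_neg hD hK). pose proof (sqrt_pos (D1 ^ 2 + K)).
  split; [exact hb | destruct ha; lra].
Qed.

Lemma saddle_of_spectrum : 0 < K -> saddle n F p.
Proof.
  intros hK. assert (hD : 0 <= D1 ^ 2 + K) by nra.
  pose proof (sqrt_disc_gt _ _ D1_neg hK) as hgt.
  split; [exact equil |]. exists J. split; [exact jac |]. split; [| split].
  - intros a b hab. apply spectrum in hab.
    destruct (qroots_real _ _ _ _ hD hab) as [hb ha]. split; [exact hb | destruct ha; lra].
  - exists (D1 + sqrt (D1 ^ 2 + K)). split; [| lra]. apply spectrum.
    unfold qroots, csqrt. destruct (Rle_dec 0 (D1 ^ 2 + K)); [| lra].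
    left; split; reflexivity.
  - exists (D1 - sqrt (D1 ^ 2 + K)). split; [| lra]. apply spectrum.
    unfold qroots, csqrt. destruct (Rle_dec 0 (D1 ^ 2 + K)); [| lra].
    right; cbn [fst snd]; split; [reflexivity | lra].
Qed.

Lemma nonhyperbolic_of_spectrum : K = 0 -> non_hyperbolic n F p.
Proof.
  intros hK. split; [exact equil |]. exists J. split; [exact jac |].
  exists 0. apply spectrum. subst K.
  unfold qroots, csqrt. destruct (Rle_dec 0 (D1 ^ 2 + 0)); [| nra].
  replace (D1 ^ 2 + 0) with (- D1 * - D1) by ring.
  rewrite sqrt_square by lra. left; cbn [fst snd]; split; lra.
Qed.

End Classification.

Lemma sqrt6_pos : 0 < sqrt 6.
Proof. apply sqrt_lt_R0; lra. Qed.

(** The y-equation's phi-coefficient times the phi-equation's y-coefficient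
    is D2 chi''/chi: this is the constant term of the characteristic
    polynomial of the (y, phi) block. *)
Lemma coupling_product (gamma c ch : R) : ch <> 0 ->
  (4 - 3 * gamma) / (2 * sqrt 6) * (c / ch) * sqrt (2 / 3) = Delta2 gamma * c / ch.
Proof.
  intros hc. pose proof sqrt6_pos as h6.
  assert (h23 : sqrt (2 / 3) * sqrt 6 = 2).
  { rewrite <- sqrt_mult by lra. replace (2 / 3 * 6) with (2 * 2) by field.
    rewrite sqrt_square; lra. }
  assert (e : sqrt (2 / 3) = 2 / sqrt 6).
  { apply (Rmult_eq_reg_r (sqrt 6)); [rewrite h23; field | ]; lra. }
  rewrite e. unfold Delta2.
  replace ((4 - 3 * gamma) / (2 * sqrt 6) * (c / ch) * (2 / sqrt 6))
    with ((4 - 3 * gamma) * c / ch / (sqrt 6 * sqrt 6)) by (field; lra).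
  rewrite sqrt_sqrt by lra. field; lra.
Qed.

Definition J2 (gamma c ch : R) (i j : nat) : R :=
  match i, j with
  | 0%nat, 0%nat => (gamma - 2) / 2
  | 0%nat, 1%nat => (4 - 3 * gamma) / (2 * sqrt 6) * (c / ch)
  | 1%nat, 0%nat => sqrt (2 / 3)
  | _, _ => 0
  end.

Definition J4 (gamma c ch : R) (i j : nat) : R :=
  match i, j with
  | 0%nat, 0%nat => gamma / 2
  | 1%nat, 1%nat => (gamma - 2) / 2
  | 1%nat, 3%nat => (4 - 3 * gamma) / (2 * sqrt 6) * (c / ch)
  | 2%nat, 2%nat => gamma
  | 3%nat, 1%nat => sqrt (2 / 3)
  | _, _ => 0
  end.

Section Jacobians.
Variables (gamma : R) (V1 V2 chi chi1 chi2 : R -> R) (phi1 : R).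
Hypothesis dV1 : forall t, derivable_pt_lim V1 t (V2 t).
Hypothesis dchi : forall t, derivable_pt_lim chi t (chi1 t).
Hypothesis dchi1 : forall t, derivable_pt_lim chi1 t (chi2 t).
Hypothesis chi_pos : forall t, 0 < chi t.
Hypothesis crit : chi1 phi1 = 0.

Lemma equilibrium_planar : equilibrium 2 (sysG gamma chi chi1) (pt2 0 phi1).
Proof.
  intros i hi. pose proof (chi_pos phi1). pose proof sqrt6_pos.
  destruct i as [| [| i]]; try lia; cbv [sysG pt2]; rewrite ?crit; field; lra.
Qed.

Lemma equilibrium_full : equilibrium 4 (sysF gamma V1 chi chi1) (pt4 0 0 1 phi1).
Proof.
  intros i hi. pose proof (chi_pos phi1). pose proof sqrt6_pos.
  destruct i as [| [| [| [| i]]]]; try lia; cbv [sysF pt4]; rewrite ?crit; field; lra.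
Qed.

Local Ltac jacobian_entry :=
  eapply derivable_pt_lim_eq; [differentiate |];
  try (apply Rgt_not_eq; cbn beta; first [apply chi_pos | lra]);
  simpl; rewrite ?crit; unfold Rsqr; field; lra.

Lemma jacobian_planar :
  is_jacobian 2 (sysG gamma chi chi1) (pt2 0 phi1) (J2 gamma (chi2 phi1) (chi phi1)).
Proof.
  intros i j hi hj. pose proof (chi_pos phi1). pose proof sqrt6_pos.
  destruct i as [| [| i]]; try lia; destruct j as [| [| j]]; try lia;
  cbv [sysG upd pt2 J2 Nat.eqb];
  jacobian_entry.
Qed.

Lemma jacobian_full :
  is_jacobian 4 (sysF gamma V1 chi chi1) (pt4 0 0 1 phi1) (J4 gamma (chi2 phi1) (chi phi1)).
Proof.
  intros i j hi hj. pose proof (chi_pos phi1). pose proof sqrt6_pos.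
  destruct i as [| [| [| [| i]]]]; try lia; destruct j as [| [| [| [| j]]]]; try lia;
  cbv [sysF upd pt4 J4 Nat.eqb];
  jacobian_entry.
Qed.

End Jacobians.

Lemma block_char_qroots (gamma c ch a b : R) : ch <> 0 ->
  char2 ((gamma - 2) / 2 + 0)
        ((gamma - 2) / 2 * 0 - (4 - 3 * gamma) / (2 * sqrt 6) * (c / ch) * sqrt (2 / 3)) a b
  <-> qroots (Delta1 gamma) (Delta2 gamma * c / ch) a b.
Proof.
  intros hc. rewrite <- qroots_char2, coupling_product by exact hc.
  unfold char2, Delta1. split; intros [h1 h2]; split; lra.
Qed.

Lemma spectrum_planar (gamma c ch : R) : ch <> 0 -> forall a b,
  is_ceig 2 (J2 gamma c ch) a b <-> qroots (Delta1 gamma) (Delta2 gamma * c / ch) a b.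
Proof.
  intros hc a b. rewrite <- block_char_qroots by exact hc.
  assert (hr : 0 < sqrt (2 / 3)) by (apply sqrt_lt_R0; lra).
  split.
  - intros (u & w & (k & hk & hnz) & H).
    destruct (H 0%nat ltac:(lia)) as [r0 i0], (H 1%nat ltac:(lia)) as [r1 i1].
    cbv [fsum J2] in r0, i0, r1, i1.
    apply (block2_char _ _ _ _ a b (u 0%nat) (w 0%nat) (u 1%nat) (w 1%nat));
      [unfold block2_eigeq; lra |].
    destruct k as [| [| k]]; [tauto | tauto | lia].
  - intros hchar. destruct (char2_block _ _ _ _ _ _ hchar) as (e1 & e2 & e3 & e4).
    exists (fun k => match k with 0%nat => a | _ => sqrt (2 / 3) end).
    exists (fun k => match k with 0%nat => b | _ => 0 end).
    split.
    + exists 1%nat. split; [lia | left; lra].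
    + intros i hi. destruct i as [| [| i]]; try lia; cbv [fsum J2]; split; lra.
Qed.

Lemma spectrum_full (gamma c ch : R) : ch <> 0 -> forall a b,
  is_ceig 4 (J4 gamma c ch) a b <->
  ((a = gamma / 2 /\ b = 0) \/ (a = gamma /\ b = 0) \/
   qroots (Delta1 gamma) (Delta2 gamma * c / ch) a b).
Proof.
  intros hc a b. rewrite <- block_char_qroots by exact hc.
  assert (hr : 0 < sqrt (2 / 3)) by (apply sqrt_lt_R0; lra).
  split.
  - intros (u & w & (k & hk & hnz) & H).
    destruct (H 0%nat ltac:(lia)) as [r0 i0], (H 1%nat ltac:(lia)) as [r1 i1],
             (H 2%nat ltac:(lia)) as [r2 i2], (H 3%nat ltac:(lia)) as [r3 i3].
    cbv [fsum J4] in r0, i0, r1, i1, r2, i2, r3, i3.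
    assert (hblock : (u 1%nat <> 0 \/ w 1%nat <> 0 \/ u 3%nat <> 0 \/ w 3%nat <> 0) ->
                     char2 ((gamma - 2) / 2 + 0) ((gamma - 2) / 2 * 0 -
                       (4 - 3 * gamma) / (2 * sqrt 6) * (c / ch) * sqrt (2 / 3)) a b).
    { apply (block2_char _ _ _ _ a b); unfold block2_eigeq; lra. }
    destruct k as [| [| [| [| k]]]]; try lia.
    + left. apply (scalar_eigvec _ a b (u 0%nat) (w 0%nat)); lra.
    + right; right. apply hblock; tauto.
    + right; left. apply (scalar_eigvec _ a b (u 2%nat) (w 2%nat)); lra.
    + right; right. apply hblock; tauto.
  - intros [[-> ->] | [[-> ->] | hchar]].
    + exists (fun k => match k with 0%nat => 1 | _ => 0 end), (fun _ => 0).
      split; [exists 0%nat; split; [lia | left; lra] |].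
      intros i hi. destruct i as [| [| [| [| i]]]]; try lia; cbv [fsum J4]; split; lra.
    + exists (fun k => match k with 2%nat => 1 | _ => 0 end), (fun _ => 0).
      split; [exists 2%nat; split; [lia | left; lra] |].
      intros i hi. destruct i as [| [| [| [| i]]]]; try lia; cbv [fsum J4]; split; lra.
    + destruct (char2_block _ _ _ _ _ _ hchar) as (e1 & e2 & e3 & e4).
      exists (fun k => match k with 1%nat => a | 3%nat => sqrt (2 / 3) | _ => 0 end).
      exists (fun k => match k with 1%nat => b | _ => 0 end).
      split; [exists 3%nat; split; [lia | left; lra] |].
      intros i hi. destruct i as [| [| [| [| i]]]]; try lia; cbv [fsum J4]; split; lra.
Qed.

Section Thresholds.
Variables (D1 D2 c ch : R).
Hypothesis ch_pos : 0 < ch.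

Lemma discriminant_scaled : D2 <> 0 ->
  (D1 ^ 2 + D2 * c / ch) * ch = D2 * (c - - D1 ^ 2 * ch / D2).
Proof. intros; field; lra. Qed.

Lemma discriminant_neg :
  (0 < D2 /\ c < - D1 ^ 2 * ch / D2) \/ (D2 < 0 /\ c > - D1 ^ 2 * ch / D2) ->
  D1 ^ 2 + D2 * c / ch < 0.
Proof.
  intros H. assert (hD2 : D2 <> 0) by (destruct H; lra).
  pose proof (discriminant_scaled hD2).
  destruct H as [[h1 h2] | [h1 h2]]; nra.
Qed.

Lemma discriminant_nonneg :
  (0 < D2 /\ - D1 ^ 2 * ch / D2 <= c) \/ (D2 < 0 /\ c <= - D1 ^ 2 * ch / D2) ->
  0 <= D1 ^ 2 + D2 * c / ch.
Proof.
  intros H. assert (hD2 : D2 <> 0) by (destruct H; lra).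
  pose proof (discriminant_scaled hD2).
  destruct H as [[h1 h2] | [h1 h2]]; nra.
Qed.

Lemma coupling_neg : (0 < D2 /\ c < 0) \/ (D2 < 0 /\ 0 < c) -> D2 * c / ch < 0.
Proof.
  intros H. assert (h : D2 * c / ch * ch = D2 * c) by (field; lra).
  destruct H as [[h1 h2] | [h1 h2]]; nra.
Qed.

Lemma coupling_pos : (0 < D2 /\ 0 < c) \/ (D2 < 0 /\ c < 0) -> 0 < D2 * c / ch.
Proof.
  intros H. assert (h : D2 * c / ch * ch = D2 * c) by (field; lra).
  destruct H as [[h1 h2] | [h1 h2]]; nra.
Qed.

End Thresholds.

Theorem mainTheorem4 :
  forall (gamma : R) (V V1 V2 V3 chi chi1 chi2 chi3 : R -> R) (phi1 : R),
    0 < gamma < 2 -> gamma <> 4 / 3 ->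
    C3 V V1 V2 V3 -> (forall t, 0 <= V t) ->
    C3 chi chi1 chi2 chi3 -> (forall t, 0 < chi t) ->
    chi1 phi1 = 0 ->
    let D1 := Delta1 gamma in
    let D2 := Delta2 gamma in
    let s := csqrt (D1 ^ 2 + D2 * chi2 phi1 / chi phi1) in
    let c := chi2 phi1 in
    let thr := - D1 ^ 2 * chi phi1 / D2 in
    (* (a) *)
    (equilibrium 4 (sysF gamma V1 chi chi1) (pt4 0 0 1 phi1) /\
     exists J, is_jacobian 4 (sysF gamma V1 chi chi1) (pt4 0 0 1 phi1) J /\
       forall a b, is_ceig 4 J a b <->
         ((a = gamma / 2 /\ b = 0) \/ (a = gamma /\ b = 0) \/
          (a = D1 + fst s /\ b = snd s) \/ (a = D1 - fst s /\ b = - snd s)))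
    /\
    (* (b) *)
    (equilibrium 2 (sysG gamma chi chi1) (pt2 0 phi1) /\
     (exists J, is_jacobian 2 (sysG gamma chi chi1) (pt2 0 phi1) J /\
       forall a b, is_ceig 2 J a b <->
         ((a = D1 + fst s /\ b = snd s) \/ (a = D1 - fst s /\ b = - snd s))) /\
     (((gamma < 4 / 3 /\ c < thr) \/ (4 / 3 < gamma /\ c > thr)) ->
        stable_focus 2 (sysG gamma chi chi1) (pt2 0 phi1)) /\
     (((gamma < 4 / 3 /\ thr <= c < 0) \/ (4 / 3 < gamma /\ 0 < c <= thr)) ->
        stable_node 2 (sysG gamma chi chi1) (pt2 0 phi1)) /\
     (((gamma < 4 / 3 /\ c > 0) \/ (4 / 3 < gamma /\ c < 0)) ->
        saddle 2 (sysG gamma chi chi1) (pt2 0 phi1)) /\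
     (c = 0 -> non_hyperbolic 2 (sysG gamma chi chi1) (pt2 0 phi1))).
Proof.
  intros gamma V V1 V2 V3 chi chi1 chi2 chi3 phi1 hg hg43 [_ [dV1 _]] _
         [dchi [dchi1 _]] chi_pos crit D1 D2 s c thr.
  pose proof (chi_pos phi1) as hch. assert (hchn : chi phi1 <> 0) by lra.
  assert (hD1 : D1 < 0) by (unfold D1, Delta1; lra).
  assert (hD2 : gamma < 4 / 3 -> 0 < D2) by (unfold D2, Delta2; lra).
  assert (hD2' : 4 / 3 < gamma -> D2 < 0) by (unfold D2, Delta2; lra).
  pose proof (equilibrium_planar gamma chi chi1 phi1 chi_pos crit) as EQ2.
  pose proof (jacobian_planar gamma chi chi1 chi2 phi1 dchi dchi1 chi_pos crit) as JAC2.
  pose proof (spectrum_planar gamma c (chi phi1) hchn) as SP2.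
  split; [split |].
  - exact (equilibrium_full gamma V1 chi chi1 phi1 chi_pos crit).
  - exists (J4 gamma c (chi phi1)). split.
    + exact (jacobian_full gamma V1 V2 chi chi1 chi2 phi1 dV1 dchi dchi1 chi_pos crit).
    + exact (spectrum_full gamma c (chi phi1) hchn).
  - split; [exact EQ2 | split; [exists (J2 gamma c (chi phi1)); split; assumption |]].
    split; [| split; [| split]]; intros H.
    + apply (focus_of_spectrum _ _ _ _ D1 _ hD1 EQ2 JAC2 SP2), discriminant_neg; [exact hch |].
      destruct H as [[g h] | [g h]]; [left | right]; split; auto.
    + apply (node_of_spectrum _ _ _ _ D1 _ hD1 EQ2 JAC2 SP2);
        [apply discriminant_nonneg | apply coupling_neg]; try exact hch;
        destruct H as [[g h] | [g h]]; [left | right | left | right]; (split; [auto | tauto]).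
    + apply (saddle_of_spectrum _ _ _ _ D1 _ hD1 EQ2 JAC2 SP2), coupling_pos; [exact hch |].
      destruct H as [[g h] | [g h]]; [left | right]; split; auto.
    + apply (nonhyperbolic_of_spectrum _ _ _ _ D1 _ hD1 EQ2 JAC2 SP2).
      rewrite H. unfold Rdiv. ring.
Qed.
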